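(* Let $P$ be a finite non-abelian exponent-critical $p$-group. Then $P=\langle a,b\rangle$ for some $a,b\in P$ with $a$ of maximal order in $P$ (i.e. of order $\exp(P)$). Moreover, $P$ is solvable of derived length $2$.
   Context: A finite group $G$ is exponent-critical if $\exp(G)$ is not the least common multiple of the exponents of the proper non-abelian subgroups of $G$. *)

From mathcomp Require Import all_boot all_fingroup all_solvable.
Set Implicit Arguments. Unset Strict Implicit. Unset Printing Implicit Defensive.
Import GroupScope.

Definition exponent_critical (gT : finGroupType) (G : {group gT}) : bool :=
  exponent G !=
    \big[lcmn/1%N]_(H : {group gT} | (H \proper G) && ~~ abelian H) exponent H.

From mathcomp Require Import all_boot all_fingroup all_solvable.
Set Implicit Arguments. Unset Strict Implicit. Unset Printing Implicit Defensive.
Import GroupScope.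

(* In an exponent-critical group P every proper subgroup containing an element
   of order exp(P) is abelian. A non-abelian p-group has a non-central element
   a of order exp(P) (if the one we start from is central, multiply it by a
   non-central element of smaller order); for any b not commuting with a,
   <<a, b>> is non-abelian of full exponent, hence equals P. A maximal
   subgroup M containing a is abelian and P' <= Phi(P) <= M, so
   P'' <= M' = 1. *)

Lemma order_mul_p_elt_lt (gT : finGroupType) (p : nat) (x a : gT) :
  prime p -> p.-elt x -> p.-elt a -> commute x a -> #[x] < #[a] ->
  #[x * a] = #[a].
Proof.
move=> p_pr px pa cxa lt_xa; have p_gt1 := prime_gt1 p_pr.
have [m ox] := p_natP px; have [n oa] := p_natP pa.
have [k oxa] := p_natP (p_eltM cxa px pa).
have lt_mn : m < n by rewrite -(ltn_exp2l _ _ p_gt1) -ox -oa.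
have n_gt0 : 0 < n by apply: leq_ltn_trans lt_mn.
have xX1 j : m <= j -> x ^+ (p ^ j) = 1.
  by move=> le_mj; apply/eqP; rewrite -order_dvdn ox dvdn_exp2l.
have le_mn1 : m <= n.-1 by rewrite -ltnS prednK.
rewrite oxa oa; apply/eqP; rewrite eqn_exp2l // eqn_leq; apply/andP; split.
  rewrite -(dvdn_Pexp2l _ _ p_gt1) -oxa order_dvdn expgMn //.
  by rewrite (xX1 n (ltnW lt_mn)) mul1g -oa expg_order.
rewrite leqNgt; apply/negP => lt_kn.
have : a ^+ (p ^ n.-1) == 1.
  rewrite -(mul1g (a ^+ _)) -{1}(xX1 _ le_mn1) -expgMn // -order_dvdn oxa.
  by rewrite dvdn_exp2l // -ltnS prednK.
by rewrite -order_dvdn oa dvdn_Pexp2l // -ltnS prednK // ltnn.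
Qed.

Lemma noncentral_max_order (gT : finGroupType) (p : nat) (P : {group gT}) :
  prime p -> p.-group P -> ~~ abelian P ->
  exists2 u, u \in P :\: 'Z(P) & #[u] = exponent P.
Proof.
move=> p_pr pP nabP; have [a aP oa] := exponent_witness (pgroup_nil pP).
have [aZ | naZ] := boolP (a \in 'Z(P)); last by exists a; rewrite // inE naZ.
have /subsetPn[x xP nxZ] : ~~ (P \subset 'Z(P)).
  by apply: contra nabP => sPZ; exact: (abelianS sPZ (center_abelian P)).
have [ox | ox] := eqVneq #[x] (exponent P).
  by exists x; rewrite // inE nxZ.
have lt_xa : #[x] < #[a].
  by rewrite -oa ltn_neqAle ox dvdn_leq ?exponent_gt0 ?dvdn_exponent.
exists (x * a); first by rewrite inE groupMr // nxZ groupM.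
rewrite oa (order_mul_p_elt_lt p_pr) ?(mem_p_elt pP) //.
exact: (centerC xP aZ).
Qed.

Lemma exponent_critical_proper_abelian (gT : finGroupType)
    (P H : {group gT}) (a : gT) :
  exponent_critical P -> H \proper P -> a \in H -> #[a] = exponent P ->
  abelian H.
Proof.
move=> crit prHP aH oa; apply: contraNT crit => nabH.
have eHP : exponent H = exponent P.
  by apply/eqP; rewrite eqn_dvd exponentS ?proper_sub // -oa dvdn_exponent.
rewrite eqn_dvd; apply/andP; split.
  by rewrite -eHP (biglcmn_sup H) // prHP.
by apply/dvdn_biglcmP => K /andP[/proper_sub sKP _]; apply: exponentS.
Qed.

Lemma exponent_critical_gen2 (gT : finGroupType) (P : {group gT}) (u v : gT) :
  exponent_critical P -> u \in P -> v \in P -> v \notin 'C[u] ->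
  #[u] = exponent P -> P :=: <<[set u; v]>>.
Proof.
move=> crit uP vP nvu ou; set H := <<[set u; v]>>.
have uH : u \in H by rewrite mem_gen // !inE eqxx.
have nabH : ~~ abelian H.
  apply: contra nvu => /centsP cHH; apply/cent1P.
  by apply: cHH; rewrite mem_gen // !inE eqxx ?orbT.
have sHP : H \subset P by rewrite gen_subG; apply/subsetP => x /set2P[]->.
have [// | prHP] := eqVproper sHP.
by rewrite (exponent_critical_proper_abelian crit prHP uH ou) in nabH.
Qed.

Lemma p_maximal_der1 (gT : finGroupType) (p : nat) (P M : {group gT}) :
  p.-group P -> maximal M P -> P^`(1) \subset M.
Proof.
move=> pP maxM; apply: subset_trans (Phi_sub_max maxM).
by rewrite (Phi_joing pP) joing_subl.
Qed.

Theorem mainTheorem11 (gT : finGroupType) (p : nat) (P : {group gT}) :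
  prime p -> p.-group P -> ~~ abelian P -> exponent_critical P ->
  (exists a b : gT, [/\ a \in P, b \in P, P :=: <<[set a; b]>> &
                       #[a] = exponent P])
  /\ [/\ solvable P, P^`(1) != 1 & P^`(2) == 1].
Proof.
move=> p_pr pP nabP crit.
have [a /setDP[aP naZ] oa] := noncentral_max_order p_pr pP nabP.
split.
  have /subsetPn[b bP nba] : ~~ (P \subset 'C[a]).
    by rewrite sub_cent1; apply: contra naZ => aC; rewrite inE aP.
  by exists a, b; split=> //; apply: exponent_critical_gen2.
split; [exact: pgroup_sol pP | by rewrite (sameP eqP derG1P) |].
have saP : <[a]> \subset P by rewrite cycle_subG.
have [eaP | [M maxM saM]] := maximal_exists saP.
  by move: nabP; rewrite -eaP cycle_abelian.
have abM : abelian M.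
  apply: (exponent_critical_proper_abelian crit (maxgroupp maxM) _ oa).
  by rewrite -cycle_subG.
apply/eqP/trivgP; rewrite -(derG1P abM).
exact: (commgSS (p_maximal_der1 pP maxM) (p_maximal_der1 pP maxM)).
Qed.
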